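(* Assume that for each $r\in\mathbb{N}$ the operator $L_r:Lip_d(I)\to Lip_d(I)$ is Lipschitz with Lipschitz constant $|L_r|$, and $|L|:=\sup_{r\in\mathbb{N}}|L_r|<\infty$. Then the non-stationary fractal operator $\mathfrak{F}^\alpha_b:Lip_d(I)\to C(I)$, $\mathfrak{F}^\alpha_b(f)=f^\alpha_b$, is Lipschitz and its Lipschitz constant satisfies $$|\mathfrak{F}^\alpha_b|\le\frac{1+|L|\,\|\alpha\|_\infty}{1-\|\alpha\|_\infty}.$$
   Context: Setting: $I=[x_0,x_N]$ with partition $\Delta: x_0<x_1<\dots<x_N$, $I_i=[x_{i-1},x_i]$, $l_i:I\to I_i$ the increasing affine bijection $l_i(x)=\frac{x_i-x_{i-1}}{x_N-x_0}x+\frac{x_Nx_{i-1}-x_0x_i}{x_N-x_0}$, and $Q_i=l_i^{-1}$. Scaling functions $\alpha_{i,r}:I\to\mathbb{R}$ ($i=1,\dots,N$, $r\in\mathbb{N}$) are continuous with $\|\alpha\|_\infty:=\sup_{r}\max_i\|\alpha_{i,r}\|_\infty<1$. $Lip_d(I)$ ($0<d\le1$) is the space of real functions $g$ on $I$ with $\sup_{x\ne y}|g(x)-g(y)|/|x-y|^d<\infty$, regarded as a subset of $C(I)$ with the supremum norm; Lipschitz properties of operators refer to the supremum norm (an operator $\mathcal{T}$ is Lipschitz if $\|\mathcal{T}u-\mathcal{T}v\|\le q\|u-v\|$ for some $q>0$ and all $u,v$; the best such $q$ is its Lipschitz constant $|\mathcal{T}|$). $L_r:Lip_d(I)\to Lip_d(I)$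 are operators (not necessarily linear) with $(L_rg)(x_0)=g(x_0)$, $(L_rg)(x_N)=g(x_N)$ for all $g$, and $\sup_r\|L_r\|_\infty<\infty$, where $\|L_r\|_\infty=\sup_{g\ne0}\|L_rg\|_\infty/\|g\|_\infty$. Non-stationary $\alpha$-fractal function: for $f\in C(I)$ and base functions $b_r\in C(I)$ with $b_r(x_0)=f(x_0)$, $b_r(x_N)=f(x_N)$, $\sup_r\|b_r\|_\infty<\infty$, let $C_f(I)=\{g\in C(I):g(x_0)=f(x_0),g(x_N)=f(x_N)\}$ and $T^{\alpha_r}:C_f(I)\to C_f(I)$, $(T^{\alpha_r}g)(x)=f(x)+\alpha_{i,r}(Q_i(x))(g-b_r)(Q_i(x))$ for $x\in I_i$. For every $g\in C_f(I)$, $T^{\alpha_1}\circ\cdots\circ T^{\alpha_r}g$ converges uniformly to a function independent of $g$; this is the non-stationary $\alpha$-fractal function. $f^\alpha_b$ denotes it for $f\in Lip_d(I)$ with $b_r=L_rf$. *)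

From Stdlib Require Import Reals.
From Coquelicot Require Import Coquelicot.
Open Scope R_scope.

Definition inI (a b x : R) : Prop := a <= x <= b.

Definition supnorm (a b : R) (g : R -> R) : R :=
  real (Lub_Rbar (fun y => exists x, inI a b x /\ y = Rabs (g x))).

Definition cont_on (a b : R) (g : R -> R) : Prop :=
  forall x, inI a b x -> forall eps, 0 < eps -> exists delta, 0 < delta /\
    forall y, inI a b y -> Rabs (y - x) < delta -> Rabs (g y - g x) < eps.

Definition LipD (a b d : R) (g : R -> R) : Prop :=
  exists C, forall x y, inI a b x -> inI a b y -> x <> y ->
    Rabs (g x - g y) <= C * Rpower (Rabs (x - y)) d.

Definition lipschitz_bound (a b : R) (P : (R -> R) -> Prop)
    (T : (R -> R) -> (R -> R)) (q : R) : Prop :=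
  forall u v, P u -> P v ->
    supnorm a b (fun x => T u x - T v x) <= q * supnorm a b (fun x => u x - v x).

Definition IsLipConst (a b : R) (P : (R -> R) -> Prop)
    (T : (R -> R) -> (R -> R)) (q : R) : Prop :=
  0 <= q /\ lipschitz_bound a b P T q /\
  (forall q', 0 <= q' -> lipschitz_bound a b P T q' -> q <= q').

(* Affine maps l_i : I -> I_i and their inverses Q_i (xs = partition,
   N = number of subintervals, x_0 = xs 0, x_N = xs N). *)
Definition l_map (xs : nat -> R) (N i : nat) (x : R) : R :=
  (xs i - xs (i - 1)%nat) / (xs N - xs 0%nat) * x
  + (xs N * xs (i - 1)%nat - xs 0%nat * xs i) / (xs N - xs 0%nat).

Definition Q_map (xs : nat -> R) (N i : nat) (y : R) : R :=
  ((xs N - xs 0%nat) * y - (xs N * xs (i - 1)%nat - xs 0%nat * xs i))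
  / (xs i - xs (i - 1)%nat).

Fixpoint cnt_below (xs : nat -> R) (x : R) (k : nat) : nat :=
  match k with
  | O => O
  | S k' => (cnt_below xs x k' + (if Rlt_dec (xs (S k')) x then 1 else 0))%nat
  end.

(* For x in I, the index i in 1..N with x in I_i = [x_{i-1}, x_i]
   (the smallest such i; at interior nodes both choices agree on C_f(I)). *)
Definition seg_idx (xs : nat -> R) (N : nat) (x : R) : nat :=
  S (cnt_below xs x (N - 1)).

(* The operator T^{alpha_r}; alpha i r = alpha_{i,r+1}, bs r = b_{r+1}. *)
Definition T_op (xs : nat -> R) (N : nat) (alpha : nat -> nat -> R -> R)
    (f : R -> R) (bs : nat -> R -> R) (r : nat) (g : R -> R) : R -> R :=
  fun x => let i := seg_idx xs N x in
    f x + alpha i r (Q_map xs N i x) * (g (Q_map xs N i x) - bs r (Q_map xs N i x)).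

Fixpoint comp_T (T : nat -> (R -> R) -> (R -> R)) (n k : nat) (g : R -> R)
    : R -> R :=
  match k with
  | O => g
  | S k' => T n (comp_T T (S n) k' g)
  end.

(* Non-stationary alpha-fractal function f^alpha_b with b_r = L_r f:
   the limit of T^{alpha_1} o ... o T^{alpha_r} g, taken with g = f. *)
Definition fractal (xs : nat -> R) (N : nat) (alpha : nat -> nat -> R -> R)
    (L : nat -> (R -> R) -> (R -> R)) (f : R -> R) : R -> R :=
  fun x => real (Lim_seq (fun r =>
    comp_T (T_op xs N alpha f (fun r => L r f)) 0 r f x)).

(** Fix [u], [v] in [Lip_d(I)] and put [s = ||u - v||]. If two iterates of the
    operators [T^{alpha_r}] built from [u] and from [v] are uniformly within [D]
    of each other, the next ones are within [s + ||alpha|| (D + |L| s)], because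
    the bases [L_r u] and [L_r v] are within [|L| s]. The bound
    [B s = (1 + |L| ||alpha||) s / (1 - ||alpha||)] is the fixed point of this
    affine map and dominates the starting distance [s], so all iterates stay
    within [B s] of each other, and so do their limits. Hence [B] is a
    Lipschitz bound for the fractal operator, and the best constant, the
    infimum of all Lipschitz bounds, is at most [B]. *)

From Stdlib Require Import Reals Lra Lia.
From Coquelicot Require Import Coquelicot.
Open Scope R_scope.

Lemma LimSup_seq_plus_const (v : nat -> R) (K : R) :
  LimSup_seq (fun n => v n + K) = Rbar_plus (LimSup_seq v) K.
Proof.
  destruct (ex_LimSup_seq v) as [l Hl].
  rewrite (is_LimSup_seq_unique _ _ Hl).
  apply is_LimSup_seq_unique.
  destruct l as [l| |]; simpl in *.
  - intros eps. destruct (Hl eps) as [Hfreq [M Hev]]. split.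
    + intros M'. destruct (Hfreq M') as [n [Hn Hvn]]. exists n. split; [auto | lra].
    + exists M. intros n Hn. specialize (Hev n Hn). lra.
  - intros C M. destruct (Hl (C - K) M) as [n [Hn Hvn]]. exists n. split; [auto | lra].
  - intros C. destruct (Hl (C - K)) as [M HM]. exists M. intros n Hn.
    specialize (HM n Hn). lra.
Qed.

Lemma LimInf_seq_plus_const (v : nat -> R) (K : R) :
  LimInf_seq (fun n => v n + K) = Rbar_plus (LimInf_seq v) K.
Proof.
  destruct (ex_LimInf_seq v) as [l Hl].
  rewrite (is_LimInf_seq_unique _ _ Hl).
  apply is_LimInf_seq_unique.
  destruct l as [l| |]; simpl in *.
  - intros eps. destruct (Hl eps) as [Hfreq [M Hev]]. split.
    + intros M'. destruct (Hfreq M') as [n [Hn Hvn]]. exists n. split; [auto | lra].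
    + exists M. intros n Hn. specialize (Hev n Hn). lra.
  - intros C. destruct (Hl (C - K)) as [M HM]. exists M. intros n Hn.
    specialize (HM n Hn). lra.
  - intros C M. destruct (Hl (C - K) M) as [n [Hn Hvn]]. exists n. split; [auto | lra].
Qed.

(* No convergence is assumed: [real (Lim_seq _)] is a junk value when the
   limit is infinite or does not exist, and the bound holds all the same. *)
Lemma real_Lim_seq_dist_le (u v : nat -> R) (K : R) : 0 <= K ->
  (forall n, Rabs (u n - v n) <= K) ->
  Rabs (real (Lim_seq u) - real (Lim_seq v)) <= K.
Proof.
  intros HK Huv.
  assert (Hu : forall n, u n <= v n + K).
  { intros n. specialize (Huv n). apply Rabs_le_between in Huv. lra. }
  assert (Hv : forall n, v n <= u n + K).
  { intros n. specialize (Huv n). apply Rabs_le_between in Huv. lra. }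
  pose proof (LimSup_le u _ (ex_intro _ 0%nat (fun n _ => Hu n))) as Hsup_u.
  pose proof (LimSup_le v _ (ex_intro _ 0%nat (fun n _ => Hv n))) as Hsup_v.
  pose proof (LimInf_le u _ (ex_intro _ 0%nat (fun n _ => Hu n))) as Hinf_u.
  pose proof (LimInf_le v _ (ex_intro _ 0%nat (fun n _ => Hv n))) as Hinf_v.
  rewrite LimSup_seq_plus_const in Hsup_u, Hsup_v.
  rewrite LimInf_seq_plus_const in Hinf_u, Hinf_v.
  unfold Lim_seq.
  destruct (LimSup_seq u) as [su| |], (LimSup_seq v) as [sv| |],
    (LimInf_seq u) as [iu| |], (LimInf_seq v) as [iv| |];
    simpl in *; try contradiction;
    try (rewrite Rminus_diag, Rabs_R0; lra);
    apply Rabs_le_between; split; lra.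
Qed.

Definition bounded_on (a b : R) (h : R -> R) : Prop :=
  exists M, forall x, inI a b x -> Rabs (h x) <= M.

Lemma Rabs_le_supnorm a b h x :
  bounded_on a b h -> inI a b x -> Rabs (h x) <= supnorm a b h.
Proof.
  intros [M HM] Hx. unfold supnorm.
  destruct (Lub_Rbar_correct (fun y => exists x, inI a b x /\ y = Rabs (h x)))
    as [Hub Hleast].
  pose proof (Hub (Rabs (h x)) (ex_intro _ x (conj Hx eq_refl))) as Hge.
  assert (Hle : Rbar_le (Lub_Rbar (fun y => exists x, inI a b x /\ y = Rabs (h x))) M).
  { apply Hleast. intros y [z [Hz ->]]. exact (HM z Hz). }
  destruct (Lub_Rbar _); simpl in *; tauto.
Qed.

Lemma supnorm_le a b h C : 0 <= C ->
  (forall x, inI a b x -> Rabs (h x) <= C) -> supnorm a b h <= C.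
Proof.
  intros HC HhC. unfold supnorm.
  destruct (Lub_Rbar_correct (fun y => exists x, inI a b x /\ y = Rabs (h x)))
    as [_ Hleast].
  assert (Hle : Rbar_le (Lub_Rbar (fun y => exists x, inI a b x /\ y = Rabs (h x))) C).
  { apply Hleast. intros y [z [Hz ->]]. exact (HhC z Hz). }
  destruct (Lub_Rbar _); simpl in *; try tauto; lra.
Qed.

Lemma supnorm_ge0 a b h : a <= b -> 0 <= supnorm a b h.
Proof.
  intros Hab. unfold supnorm.
  destruct (Lub_Rbar_correct (fun y => exists x, inI a b x /\ y = Rabs (h x)))
    as [Hub _].
  assert (Ha : inI a b a) by (unfold inI; lra).
  pose proof (Hub (Rabs (h a)) (ex_intro _ a (conj Ha eq_refl))) as Hge.
  pose proof (Rabs_pos (h a)).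
  destruct (Lub_Rbar _); simpl in *; try tauto; lra.
Qed.

Lemma bounded_on_sub a b g h :
  bounded_on a b g -> bounded_on a b h -> bounded_on a b (fun x => g x - h x).
Proof.
  intros [Mg HMg] [Mh HMh]. exists (Mg + Mh). intros x Hx.
  unfold Rminus. eapply Rle_trans; [apply Rabs_triang |].
  rewrite Rabs_Ropp. specialize (HMg x Hx). specialize (HMh x Hx). lra.
Qed.

Lemma LipD_bounded a b d g : a <= b -> 0 <= d -> LipD a b d g -> bounded_on a b g.
Proof.
  intros Hab Hd [C HC].
  exists (Rabs (g a) + Rabs C * Rpower (b - a) d).
  assert (Hpow_pos : 0 < Rpower (b - a) d) by (unfold Rpower; apply exp_pos).
  assert (Ha : inI a b a) by (unfold inI; lra).
  intros x Hx. destruct (Req_dec x a) as [-> | Hxa].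
  - pose proof (Rabs_pos C). nra.
  - specialize (HC x a Hx Ha Hxa).
    assert (Hpow_le : Rpower (Rabs (x - a)) d <= Rpower (b - a) d).
    { apply Rle_Rpower_l; [exact Hd |]. destruct Hx.
      split; [apply Rabs_pos_lt; lra | rewrite Rabs_right; lra]. }
    assert (Hpow_pos' : 0 < Rpower (Rabs (x - a)) d) by (unfold Rpower; apply exp_pos).
    assert (C * Rpower (Rabs (x - a)) d <= Rabs C * Rpower (b - a) d).
    { apply Rle_trans with (Rabs C * Rpower (Rabs (x - a)) d).
      - apply Rmult_le_compat_r; [lra | apply Rle_abs].
      - apply Rmult_le_compat_l; [apply Rabs_pos | lra]. }
    pose proof (Rabs_triang_inv (g x) (g a)). lra.
Qed.

Lemma Rabs_sub_le_supnorm a b d g h x : a <= b -> 0 <= d ->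
  LipD a b d g -> LipD a b d h -> inI a b x ->
  Rabs (g x - h x) <= supnorm a b (fun x => g x - h x).
Proof.
  intros Hab Hd Hg Hh Hx.
  apply (Rabs_le_supnorm a b (fun x => g x - h x)); [| exact Hx].
  apply bounded_on_sub; eapply LipD_bounded; eauto.
Qed.

Lemma lipschitz_bound_le a b P T q q' : a <= b -> q <= q' ->
  lipschitz_bound a b P T q -> lipschitz_bound a b P T q'.
Proof.
  intros Hab Hq HT u v Hu Hv. eapply Rle_trans; [exact (HT u v Hu Hv) |].
  apply Rmult_le_compat_r; [apply supnorm_ge0 |]; assumption.
Qed.

Lemma IsLipConst_exists a b P T B : a <= b -> 0 <= B ->
  lipschitz_bound a b P T B -> exists q, IsLipConst a b P T q /\ q <= B.
Proof.
  intros Hab HB HTB.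
  set (Bounds := fun q => 0 <= q /\ lipschitz_bound a b P T q).
  destruct (Glb_Rbar_correct Bounds) as [Hlow Hgreatest].
  assert (Hge0 : Rbar_le 0 (Glb_Rbar Bounds)).
  { apply Hgreatest. intros q [Hq _]. exact Hq. }
  assert (HleB : Rbar_le (Glb_Rbar Bounds) B) by (apply Hlow; split; assumption).
  destruct (Glb_Rbar Bounds) as [q| |]; simpl in Hge0, HleB; try contradiction.
  exists q. split; [| exact HleB].
  split; [exact Hge0 | split].
  - intros u v Hu Hv.
    set (s := supnorm a b (fun x => u x - v x)).
    set (t := supnorm a b (fun x => T u x - T v x)).
    assert (Hs : 0 <= s) by (apply supnorm_ge0; exact Hab).
    destruct (Req_dec s 0) as [Hs0 | Hs0].
    + pose proof (HTB u v Hu Hv) as Ht. fold s t in Ht. rewrite Hs0 in *. lra.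
    + assert (Hratio : Rbar_le (t / s) q).
      { apply Hgreatest. intros q' [_ Hq']. simpl.
        specialize (Hq' u v Hu Hv). fold s t in Hq'.
        apply Rle_div_l; lra. }
      simpl in Hratio. apply Rle_div_l in Hratio; lra.
  - intros q' Hq' Hbound. exact (Hlow q' (conj Hq' Hbound)).
Qed.

Section NonStationaryIterates.

Variables (xs : nat -> R) (N : nat).
Hypothesis Hxs : forall i, (i < N)%nat -> xs i < xs (S i).

Local Notation a := (xs 0%nat).
Local Notation b := (xs N).

Lemma xs_le i j : (i <= j <= N)%nat -> xs i <= xs j.
Proof.
  induction j as [|j IH]; intros Hij.
  - replace i with 0%nat by lia. lra.
  - destruct (Nat.eq_dec i (S j)) as [-> | Hne]; [lra |].
    assert (xs j < xs (S j)) by (apply Hxs; lia).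
    assert (xs i <= xs j) by (apply IH; lia). lra.
Qed.

Lemma xs0_le_xsN : a <= b.
Proof. apply xs_le. lia. Qed.

Lemma cnt_below_spec x k : (k <= N - 1)%nat ->
  (cnt_below xs x k <= k)%nat /\
  (cnt_below xs x k = 0%nat \/ xs (cnt_below xs x k) < x) /\
  (cnt_below xs x k = k \/ x <= xs (S (cnt_below xs x k))).
Proof.
  induction k as [|k IH]; intros Hk; simpl; [lia |].
  destruct (IH ltac:(lia)) as [Hle [Hlow Hup]].
  destruct (Rlt_dec (xs (S k)) x) as [Hlt | Hnlt].
  - assert (Hall : cnt_below xs x k = k).
    { destruct Hup as [Hup | Hup]; [exact Hup |].
      assert (xs (S (cnt_below xs x k)) <= xs (S k)) by (apply xs_le; lia). lra. }
    rewrite Hall, Nat.add_1_r. auto.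
  - rewrite Nat.add_0_r. split; [lia | split; [exact Hlow |]].
    destruct Hup as [-> | Hup]; right; [lra | exact Hup].
Qed.

Hypothesis HN : (0 < N)%nat.

Lemma seg_idx_spec x : inI a b x ->
  (1 <= seg_idx xs N x <= N)%nat /\
  xs (seg_idx xs N x - 1)%nat <= x <= xs (seg_idx xs N x).
Proof.
  intros [Hax Hxb]. unfold seg_idx.
  destruct (cnt_below_spec x (N - 1) (le_n _)) as [Hle [Hlow Hup]].
  set (c := cnt_below xs x (N - 1)) in *.
  replace (S c - 1)%nat with c by lia.
  split; [lia | split].
  - destruct Hlow as [-> | Hlow]; [exact Hax | lra].
  - destruct Hup as [-> | Hup]; [| exact Hup].
    replace (S (N - 1)) with N by lia. exact Hxb.
Qed.

Lemma Q_map_seg_idx_in x : inI a b x -> inI a b (Q_map xs N (seg_idx xs N x) x).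
Proof.
  intros Hx. destruct (seg_idx_spec x Hx) as [Hi [Hl Hr]].
  set (i := seg_idx xs N x) in *.
  assert (Hlen : xs (i - 1)%nat < xs i).
  { replace i with (S (i - 1)) at 2 by lia. apply Hxs. lia. }
  pose proof xs0_le_xsN as Hab.
  set (t := (x - xs (i - 1)%nat) / (xs i - xs (i - 1)%nat)).
  assert (HQ : Q_map xs N i x = xs 0%nat + (xs N - xs 0%nat) * t).
  { unfold Q_map, t. field. lra. }
  assert (Ht0 : 0 <= t) by (apply Rdiv_le_0_compat; lra).
  assert (Ht1 : t <= 1) by (apply Rle_div_l; lra).
  rewrite HQ. unfold inI. split; nra.
Qed.

Variables (alpha : nat -> nat -> R -> R) (A : R).
Hypothesis Halpha : forall i r y, (1 <= i <= N)%nat -> inI a b y ->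
  Rabs (alpha i r y) <= A.

Section TwoOperators.

Variables (f1 f2 : R -> R) (b1 b2 : nat -> R -> R) (c K : R).
Hypothesis Hf : forall x, inI a b x -> Rabs (f1 x - f2 x) <= c.
Hypothesis Hb : forall r y, inI a b y -> Rabs (b1 r y - b2 r y) <= K.

Lemma T_op_dist_le r g1 g2 D :
  (forall y, inI a b y -> Rabs (g1 y - g2 y) <= D) ->
  forall x, inI a b x ->
  Rabs (T_op xs N alpha f1 b1 r g1 x - T_op xs N alpha f2 b2 r g2 x) <= c + A * (D + K).
Proof.
  intros Hg x Hx. unfold T_op. cbv zeta.
  set (y := Q_map xs N (seg_idx xs N x) x).
  assert (Hy : inI a b y) by exact (Q_map_seg_idx_in x Hx).
  assert (Hal : Rabs (alpha (seg_idx xs N x) r y) <= A).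
  { apply Halpha; [apply seg_idx_spec |]; assumption. }
  assert (Hdiff : Rabs ((g1 y - g2 y) - (b1 r y - b2 r y)) <= D + K).
  { unfold Rminus at 1. eapply Rle_trans; [apply Rabs_triang |].
    rewrite Rabs_Ropp. specialize (Hg y Hy). specialize (Hb r y Hy). lra. }
  replace (f1 x + alpha (seg_idx xs N x) r y * (g1 y - b1 r y)
           - (f2 x + alpha (seg_idx xs N x) r y * (g2 y - b2 r y)))
    with ((f1 x - f2 x) + alpha (seg_idx xs N x) r y * ((g1 y - g2 y) - (b1 r y - b2 r y)))
    by ring.
  eapply Rle_trans; [apply Rabs_triang |]. rewrite Rabs_mult.
  apply Rplus_le_compat; [exact (Hf x Hx) |].
  apply Rmult_le_compat; auto using Rabs_pos.
Qed.

Lemma comp_T_dist_le B g1 g2 : c + A * (B + K) <= B ->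
  (forall y, inI a b y -> Rabs (g1 y - g2 y) <= B) ->
  forall k n x, inI a b x ->
  Rabs (comp_T (T_op xs N alpha f1 b1) n k g1 x
        - comp_T (T_op xs N alpha f2 b2) n k g2 x) <= B.
Proof.
  intros HB Hg k. induction k as [|k IH]; intros n x Hx; simpl.
  - exact (Hg x Hx).
  - eapply Rle_trans; [| exact HB]. apply T_op_dist_le; [exact (IH (S n)) | exact Hx].
Qed.

End TwoOperators.

Variables (d : R) (L : nat -> (R -> R) -> (R -> R)) (Lsup : R).
Hypothesis Hd : 0 <= d.
Hypothesis HA : 0 <= A < 1.
Hypothesis HLsup : 0 <= Lsup.
Hypothesis HLlip : forall r g, LipD a b d g -> LipD a b d (L r g).
Hypothesis HLbound : forall r, lipschitz_bound a b (LipD a b d) (L r) Lsup.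

Lemma fractal_lipschitz_bound :
  lipschitz_bound a b (LipD a b d) (fractal xs N alpha L) ((1 + Lsup * A) / (1 - A)).
Proof.
  pose proof xs0_le_xsN as Hab.
  set (B := (1 + Lsup * A) / (1 - A)).
  assert (HB_fix : 1 + A * (B + Lsup) = B) by (unfold B; field; lra).
  assert (HB1 : 1 <= B) by (apply Rle_div_r; nra).
  intros u v Hu Hv.
  set (s := supnorm a b (fun x => u x - v x)).
  assert (Hs : 0 <= s) by (apply supnorm_ge0; exact Hab).
  assert (Huv : forall x, inI a b x -> Rabs (u x - v x) <= s).
  { intros x Hx. exact (Rabs_sub_le_supnorm a b d u v x Hab Hd Hu Hv Hx). }
  assert (HLuv : forall r y, inI a b y -> Rabs (L r u y - L r v y) <= Lsup * s).
  { intros r y Hy. eapply Rle_trans.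
    - exact (Rabs_sub_le_supnorm a b d _ _ y Hab Hd (HLlip r u Hu) (HLlip r v Hv) Hy).
    - exact (HLbound r u v Hu Hv). }
  apply supnorm_le; [nra |]. intros x Hx.
  unfold fractal. apply real_Lim_seq_dist_le; [nra |]. intros k.
  apply (comp_T_dist_le u v _ _ s (Lsup * s) Huv HLuv).
  - replace (s + A * (B * s + Lsup * s)) with ((1 + A * (B + Lsup)) * s) by ring.
    rewrite HB_fix. lra.
  - intros y Hy. specialize (Huv y Hy). nra.
  - exact Hx.
Qed.

End NonStationaryIterates.

Theorem mainTheorem4
  (xs : nat -> R) (N : nat) (d : R)
  (alpha : nat -> nat -> R -> R) (L : nat -> (R -> R) -> (R -> R))
  (anorm : R) (Lc : nat -> R) (Lsup : R)
  (HN : (0 < N)%nat)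
  (Hxs : forall i, (i < N)%nat -> xs i < xs (S i))
  (Hd : 0 < d <= 1)
  (Halpha_cont : forall i r, (1 <= i <= N)%nat -> cont_on (xs 0%nat) (xs N) (alpha i r))
  (Hanorm : is_lub (fun y => exists i r x, (1 <= i <= N)%nat /\ inI (xs 0%nat) (xs N) x
                                /\ y = Rabs (alpha i r x)) anorm)
  (Hanorm1 : anorm < 1)
  (HLlip : forall r g, LipD (xs 0%nat) (xs N) d g -> LipD (xs 0%nat) (xs N) d (L r g))
  (HLend : forall r g, LipD (xs 0%nat) (xs N) d g ->
      L r g (xs 0%nat) = g (xs 0%nat) /\ L r g (xs N) = g (xs N))
  (HLbdd : exists M, forall r g, LipD (xs 0%nat) (xs N) d g ->
      supnorm (xs 0%nat) (xs N) g <> 0 ->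
      supnorm (xs 0%nat) (xs N) (L r g) <= M * supnorm (xs 0%nat) (xs N) g)
  (HLc : forall r, IsLipConst (xs 0%nat) (xs N) (LipD (xs 0%nat) (xs N) d) (L r) (Lc r))
  (HLsup : is_lub (fun y => exists r, y = Lc r) Lsup) :
  exists q, IsLipConst (xs 0%nat) (xs N) (LipD (xs 0%nat) (xs N) d)
              (fractal xs N alpha L) q
         /\ q <= (1 + Lsup * anorm) / (1 - anorm).
Proof.
  pose proof (xs0_le_xsN xs N Hxs) as Hab.
  destruct Hanorm as [Halpha _].
  assert (Hanorm0 : 0 <= anorm).
  { eapply Rle_trans; [apply (Rabs_pos (alpha 1%nat 0%nat (xs 0%nat))) |].
    apply Halpha. exists 1%nat, 0%nat, (xs 0%nat).
    repeat split; lia || lra. }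
  destruct HLsup as [HLc_le _].
  assert (HLc_sup : forall r, Lc r <= Lsup) by (intros r; apply HLc_le; exists r; reflexivity).
  assert (HLsup0 : 0 <= Lsup) by (eapply Rle_trans; [apply (HLc 0%nat) | apply HLc_sup]).
  assert (Halpha_le : forall i r y, (1 <= i <= N)%nat -> inI (xs 0%nat) (xs N) y ->
            Rabs (alpha i r y) <= anorm)
    by (intros i r y Hi Hy; apply Halpha; exists i, r, y; auto).
  assert (HLbound : forall r,
            lipschitz_bound (xs 0%nat) (xs N) (LipD (xs 0%nat) (xs N) d) (L r) Lsup)
    by (intros r; apply lipschitz_bound_le with (Lc r); [exact Hab | apply HLc_sup | apply HLc]).
  apply IsLipConst_exists; [exact Hab | apply Rle_div_r; nra |].
  apply (fractal_lipschitz_bound xs N Hxs HN alpha anorm Halpha_le d L Lsup);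
    auto; lra.
Qed.
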